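(* Let $\mathcal{S}\subseteq\mathbb{R}^n$, $\mathcal{A}\subseteq\mathbb{R}^m$, let $f:\mathcal{S}\times\mathcal{A}\to\mathbb{R}^n$ satisfy $\|f(\xi,v)-f(\overline{\xi},\overline{v})\|\leqslant L_{f\xi}\|\xi-\overline{\xi}\|+L_{fv}\|v-\overline{v}\|$ for all $\xi,\overline{\xi}\in\mathcal{S}$, $v,\overline{v}\in\mathcal{A}$, and let $g:\mathcal{S}\times\mathcal{A}\to\mathbb{R}$. Let $\Sigma=(\mathcal{S},\mathcal{A},F,g,g)$ be the transition system with $\mathcal{A}(\xi)=\{v\in\mathcal{A}: f(\xi,v)\in\mathcal{S}\}$ and $F(\xi,v)=\{f(\xi,v)\}$ for $v\in\mathcal{A}(\xi)$, and let $\Sigma_{\mathrm{D}}=(\mathcal{S}_{\mathrm{D}},\mathcal{A}_{\mathrm{D}},\Delta,\overline{g},\underline{g})$ be the symbolic model with parameters $\eta,\mu>0$ described in the context. Then the relation $\mathcal{R}$ consisting of all pairs $(s,\xi)\in\mathcal{S}_{\mathrm{D}}\times\mathcal{S}$ with $\xi\in s$ is an alternating simulation relation from $\Sigma_{\mathrm{D}}$ to $\Sigma$, i.e. (1) for every $s\in\mathcal{S}_{\mathrm{D}}$ there is $\xi\in\mathcal{S}$ with $(s,\xi)\in\mathcal{R}$; and (2) for every $(s,\xi)\in\mathcal{R}$ and every $a\in\mathcal{A}_{\mathrm{D}}(s)$ there exists $v\in\mathcal{A}(\xi)$ such that for every $\xi'\in F(\xi,v)$ there exists $s'\in\Delta(s,a)$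 with $(s',\xi')\in\mathcal{R}$.
   Context: $\|\cdot\|$ is the infinity norm and $\mathbb{B}=\{x:\|x\|_\infty\le 1\}$. Symbolic model $\Sigma_{\mathrm{D}}$ with quantization parameters $\eta,\mu>0$: $\mathcal{S}_{\mathrm{D}}$ is a finite partition of $\mathcal{S}$ (ignoring measure-zero overlaps) into hyperrectangular cells $s$ with center $s_c$ and $\|\xi-\overline{\xi}\|\le\eta$ for all $\xi,\overline{\xi}\in s$; $\mathcal{A}_{\mathrm{D}}$ is a finite partition of $\mathcal{A}$ into hyperrectangular cells $a$ with center $a_c$ and $\|v-\overline{v}\|\le\mu$ for all $v,\overline{v}\in a$. Transition relation: $s'\in\Delta(s,a)$ iff $s'\cap\big(f(s_c,a_c)+(L_{f\xi}\eta+L_{fv}\mu)\mathbb{B}\big)\neq\emptyset$. Enabled inputs: $a\in\mathcal{A}_{\mathrm{D}}(s)$ iff $f(s_c,a_c)+(L_{f\xi}\eta+L_{fv}\mu)\mathbb{B}$ is contained in $\mathcal{S}$ (the union of the cells). Rewards: $\overline{g}(s,a)=\max_{\xi\in s}\max_{v\in a}g(\xi,v)$, $\underline{g}(s,a)=\min_{\xi\in s}\min_{v\in a}g(\xi,v)$. *)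

From HB Require Import structures.
From mathcomp Require Import all_boot all_order all_algebra.
Set Implicit Arguments. Unset Strict Implicit. Unset Printing Implicit Defensive.
Import Order.TTheory GRing.Theory Num.Theory.
Local Open Scope ring_scope.

Section Defs.
Variable R : realFieldType.

Definition linf (n : nat) (x : 'rV[R]_n) : R := \big[Num.max/0]_(i < n) `|x ord0 i|.

(* a hyperrectangular cell [lo, hi] given by its two corners *)
Definition box (n : nat) : Type := ('rV[R]_n * 'rV[R]_n)%type.

Definition in_box (n : nat) (b : box n) (x : 'rV[R]_n) : Prop :=
  forall i : 'I_n, b.1 ord0 i <= x ord0 i <= b.2 ord0 i.

Definition in_interior (n : nat) (b : box n) (x : 'rV[R]_n) : Prop :=
  forall i : 'I_n, b.1 ord0 i < x ord0 i < b.2 ord0 i.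

Definition center (n : nat) (b : box n) : 'rV[R]_n := (2%:R)^-1 *: (b.1 + b.2).

(* P is a finite partition of X (up to measure-zero overlaps: interiors are
   pairwise disjoint) into hyperrectangular cells of diameter at most eps *)
Definition is_box_partition (n : nat) (X : 'rV[R]_n -> Prop) (P : seq (box n))
    (eps : R) : Prop :=
  [/\ (forall b, b \in P -> forall i : 'I_n, b.1 ord0 i <= b.2 ord0 i),
      (forall x, X x <-> exists2 b, b \in P & in_box b x),
      (forall i j : nat, (i < j < size P)%N -> forall x,
          ~ (in_interior (nth (0, 0) P i) x /\ in_interior (nth (0, 0) P j) x)) &
      (forall b, b \in P -> forall x y, in_box b x -> in_box b y -> linf (x - y) <= eps)].

Definition symb_trans (n m : nat) (f : 'rV[R]_n -> 'rV[R]_m -> 'rV[R]_n)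
    (Lx Lv eta mu : R) (s : box n) (a : box m) (s' : box n) : Prop :=
  exists y, in_box s' y /\
    linf (y - f (center s) (center a)) <= Lx * eta + Lv * mu.

Definition symb_enabled (n m : nat) (S : 'rV[R]_n -> Prop)
    (f : 'rV[R]_n -> 'rV[R]_m -> 'rV[R]_n)
    (Lx Lv eta mu : R) (s : box n) (a : box m) : Prop :=
  forall y, linf (y - f (center s) (center a)) <= Lx * eta + Lv * mu -> S y.

End Defs.

From HB Require Import structures.
From mathcomp Require Import all_boot all_order all_algebra.
From mathcomp Require Import lra.
Import Order.TTheory GRing.Theory Num.Theory.
Local Open Scope ring_scope.

(* The concrete input realising a symbolic input a is its centre a_c.  For xi
   in the cell s, the Lipschitz bound puts f(xi, a_c) within Lx eta + Lv mu of
   f(s_c, a_c); enabledness of a then gives f(xi, a_c) in S, and the cell s'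
   containing f(xi, a_c) meets the inflated ball, i.e. s' is in Delta(s, a). *)

Lemma center_in_box {R : realFieldType} {n : nat} (b : box R n) :
  (forall i : 'I_n, b.1 ord0 i <= b.2 ord0 i) -> in_box b (center b).
Proof.
move=> b_le i; rewrite /center !mxE; have := b_le i.
set lo := b.1 ord0 i; set hi := b.2 ord0 i => lo_le_hi.
by apply/andP; split; lra.
Qed.

Section BoxPartition.
Context {R : realFieldType} {n : nat} {X : 'rV[R]_n -> Prop}.
Context {P : seq (box R n)} {eps : R}.
Hypothesis partP : is_box_partition X P eps.

Lemma box_partition_center {b : box R n} : b \in P -> X (center b) /\ in_box b (center b).
Proof.
case: partP => box_le cover _ _ bP.
have cb := center_in_box b (box_le b bP).
by split=> //; apply/cover; exists b.
Qed.

Lemma box_partition_cover {x : 'rV[R]_n} : X x -> exists2 b, b \in P & in_box b x.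
Proof. by case: partP => _ cover _ _ /cover. Qed.

Lemma box_partition_diam {b : box R n} {x y : 'rV[R]_n} :
  b \in P -> in_box b x -> in_box b y -> linf (x - y) <= eps.
Proof. by case: partP => _ _ _ diam /diam; apply. Qed.

End BoxPartition.

Lemma lipschitz_le_radius {R : realFieldType} {n m : nat}
    {S : 'rV[R]_n -> Prop} {A : 'rV[R]_m -> Prop}
    {f : 'rV[R]_n -> 'rV[R]_m -> 'rV[R]_n} {Lx Lv eta mu : R}
    {xi xib : 'rV[R]_n} {v vb : 'rV[R]_m} :
  0 <= Lx -> 0 <= Lv ->
  (forall xi xib v vb, S xi -> S xib -> A v -> A vb ->
     linf (f xi v - f xib vb) <= Lx * linf (xi - xib) + Lv * linf (v - vb)) ->
  S xi -> S xib -> A v -> A vb ->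
  linf (xi - xib) <= eta -> linf (v - vb) <= mu ->
  linf (f xi v - f xib vb) <= Lx * eta + Lv * mu.
Proof.
move=> Lx_ge0 Lv_ge0 f_lip Sxi Sxib Av Avb xi_near v_near.
apply: le_trans (f_lip _ _ _ _ Sxi Sxib Av Avb) _.
by apply: lerD; apply: ler_wpM2l.
Qed.

Theorem proposition1 (R : realFieldType) (n m : nat)
    (S : 'rV[R]_n -> Prop) (A : 'rV[R]_m -> Prop)
    (f : 'rV[R]_n -> 'rV[R]_m -> 'rV[R]_n) (g : 'rV[R]_n -> 'rV[R]_m -> R)
    (Lx Lv eta mu : R)
    (SD : seq (box R n)) (AD : seq (box R m)) :
  0 <= Lx -> 0 <= Lv ->
  (forall xi xib v vb, S xi -> S xib -> A v -> A vb ->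
     linf (f xi v - f xib vb) <= Lx * linf (xi - xib) + Lv * linf (v - vb)) ->
  0 < eta -> 0 < mu ->
  is_box_partition S SD eta ->
  is_box_partition A AD mu ->
  (* (1) every symbolic state is related to some concrete state *)
  (forall s, s \in SD -> exists xi, S xi /\ in_box s xi) /\
  (* (2) alternating simulation condition *)
  (forall s xi, s \in SD -> S xi -> in_box s xi ->
     forall a, a \in AD -> symb_enabled S f Lx Lv eta mu s a ->
     exists v, (A v /\ S (f xi v)) /\
       forall xi', xi' = f xi v ->
         exists s', (s' \in SD /\ symb_trans f Lx Lv eta mu s a s') /\
                    (S xi' /\ in_box s' xi')).
Proof.
move=> Lx_ge0 Lv_ge0 f_lip _ _ partS partA; split.
  by move=> s /(box_partition_center partS) center_s; exists (center s).
move=> s xi sSD Sxi xi_s a aAD a_enabled.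
have [Scs cs_s] := box_partition_center partS sSD.
have [Aca ca_a] := box_partition_center partA aAD.
have xi_near := box_partition_diam partS sSD xi_s cs_s.
have ca_near := box_partition_diam partA aAD ca_a ca_a.
have succ_near := lipschitz_le_radius Lx_ge0 Lv_ge0 f_lip Sxi Scs Aca Aca xi_near ca_near.
have S_succ := a_enabled _ succ_near.
exists (center a); split=> // _ ->.
have [s' s'SD succ_s'] := box_partition_cover partS S_succ.
by exists s'; split; split=> //; exists (f xi (center a)).
Qed.
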